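(* For every $e\ge1$, the subgroup $\hat G^{(e)}\subseteq\mathrm{Aut}(X_{PGL_2(F)})$ is weakly two-transitive: for any vertices $x_1,x_2,y_1,y_2$ with $d(x_1,x_2)=d(y_1,y_2)$ there exists $g\in \hat G^{(e)}$ with $g(x_1)=y_1$ and $g(x_2)=y_2$.
   Context: Let $F$ be a non-archimedean local field with ring of integers $\mathfrak{o}$, uniformizer $\varpi$, and finite residue field of cardinality $q$. $X=X_{PGL_2(F)}$ is the Bruhat–Tits tree of $PGL_2(F)$: its vertices are homothety classes $[L]$ (under $F^\times$) of $\mathfrak{o}$-lattices $L\subset F^2$, and $[L],[L']$ are joined by an edge iff there are representatives with $\varpi L\subsetneq L'\subsetneq L$; it is a $(q+1)$-regular tree. $d$ is the path-length distance on vertices; $\mathrm{Aut}(X)$ is the group of distance-preserving bijections of the vertex set, with the topology of pointwise convergence. $GL_2(F)$ acts on lattices through its linear action on $F^2$, the centre acts trivially, and this gives an embedding $PGL_2(F)\hookrightarrow\mathrm{Aut}(X)$. For an edge $\eta=\{x_1,x_2\}$ and $e\ge1$, $B(\eta,e)=\{y: \min(d(y,x_1),d(y,x_2))\le e\}$. Define $\hat G^{(e)}=\{g\in\mathrm{Aut}(X):\ \text{for every edge }\eta\ \text{there is } g'\in PGL_2(F)\text{ with } g|_{B(\eta,e)}=g'|_{B(\eta,e)}\}$. *)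

From HB Require Import structures.
From mathcomp Require Import all_boot all_order all_algebra.
Set Implicit Arguments. Unset Strict Implicit. Unset Printing Implicit Defensive.
Import Order.TTheory GRing.Theory Num.Theory.
Local Open Scope ring_scope.

Section BT.
Variable F : fieldType.
(* a normalized discrete valuation; its value at 0 is irrelevant (0 is treated as +oo) *)
Variable v : F -> int.

Definition vge (x : F) (k : int) : Prop := x = 0 \/ k <= v x.

Definition is_discrete_valuation : Prop :=
  [/\ (forall x y, x != 0 -> y != 0 -> v (x * y) = v x + v y),
      (forall x y, x != 0 -> y != 0 -> x + y != 0 -> Num.min (v x) (v y) <= v (x + y)) &
      (forall k : int, exists x, x != 0 /\ v x = k)].

Definition inO (x : F) : Prop := vge x 0.

(* the residue field o / m is finite *)
Definition finite_residue_field : Prop :=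
  exists s : seq F, (forall r, r \in s -> inO r) /\
    forall a, inO a -> exists2 r, r \in s & vge (a - r) 1.

Definition complete_valuation : Prop :=
  forall u : nat -> F,
    (forall k : int, exists N, forall m n, (N <= m)%N -> (N <= n)%N -> vge (u m - u n) k) ->
    exists l, forall k : int, exists N, forall n, (N <= n)%N -> vge (u n - l) k.

Definition nonarch_local_field : Prop :=
  [/\ is_discrete_valuation, finite_residue_field & complete_valuation].

(* o-lattices in F^2 (row vectors): L = o e1 + o e2 for a basis (e1,e2) = rows of g *)
Definition lattice (L : 'rV[F]_2 -> Prop) : Prop :=
  exists2 g : 'M[F]_2, g \in unitmx &
    forall w, L w <-> exists a : 'rV[F]_2, (forall i, inO (a 0 i)) /\ w = a *m g.

Definition lsubset (L L' : 'rV[F]_2 -> Prop) : Prop := forall w, L w -> L' w.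

Definition hclass (L : 'rV[F]_2 -> Prop) : ('rV[F]_2 -> Prop) -> Prop :=
  fun L' => exists c : F, c != 0 /\ forall w, L' w <-> L (c *: w).

Definition is_vertex (C : ('rV[F]_2 -> Prop) -> Prop) : Prop :=
  exists L, lattice L /\ C = hclass L.

Definition vertex := {C : ('rV[F]_2 -> Prop) -> Prop | is_vertex C}.

Variable pi : F.

Definition scaleL (c : F) (L : 'rV[F]_2 -> Prop) : 'rV[F]_2 -> Prop :=
  fun w => L (c^-1 *: w).

Definition adj (x y : vertex) : Prop :=
  exists L L', sval x L /\ sval y L' /\
    lsubset (scaleL pi L) L' /\ ~ lsubset L' (scaleL pi L) /\
    lsubset L' L /\ ~ lsubset L L'.

Inductive walk : vertex -> vertex -> nat -> Prop :=
| walk0 x : walk x x 0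
| walkS x y z n : adj x y -> walk y z n -> walk x z n.+1.

Definition dist (x y : vertex) (n : nat) : Prop :=
  walk x y n /\ forall m, walk x y m -> (n <= m)%N.

Definition is_aut (g : vertex -> vertex) : Prop :=
  bijective g /\ forall x y n, dist x y n <-> dist (g x) (g y) n.

(* action of A in GL_2(F) on homothety classes: [L] |-> [L A] *)
Definition actC (A : 'M[F]_2) (C : ('rV[F]_2 -> Prop) -> Prop) :
  ('rV[F]_2 -> Prop) -> Prop := fun L' => C (fun w => L' (w *m A)).

Definition in_ball (x1 x2 : vertex) (e : nat) (y : vertex) : Prop :=
  exists n, (n <= e)%N /\ (dist y x1 n \/ dist y x2 n).

Definition in_Ghat (e : nat) (g : vertex -> vertex) : Prop :=
  is_aut g /\
  forall x1 x2, adj x1 x2 ->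
    exists2 A : 'M[F]_2, A \in unitmx &
      forall y, in_ball x1 x2 e y -> sval (g y) = actC A (sval y).

End BT.

(* The image of PGL_2(F) in Aut(X) is contained in \hat G^{(e)} (an element of
   PGL_2(F) agrees with itself on every ball), so it suffices to show that GL_2(F)
   acts transitively on pairs of vertices at a given distance n.  Writing vertices as
   classes [Lat h] of row lattices of invertible matrices h, we prove the normal form
   of geodesics: whenever d(x, z) = n there is g in GL_2(F) with x = [o^2 g] and
   z = [(o + pi^n o) g], i.e. every geodesic is a translate of a segment of the
   standard apartment.  The proof is by induction on n; the inductive step rests on
   the classification of the neighbours K of the standard vertex (pi K < o^2 < K):
   K is spanned by e1 and pi^-1 (c, 1) with c in o, or K = pi^-1 o + o.  The first
   kind extends the geodesic in normal form after a shear in GL_2(o); the second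
   kind either does so after the swap of coordinates (n = 0) or would give a shorter
   walk (n > 0).  Two geodesics in normal form, given by g and h, are then
   exchanged by the matrix g^-1 h.

   Only the multiplicativity and ultrametric inequality of the valuation and the
   uniformizer are used; finiteness of the residue field and completeness are not. *)

From HB Require Import structures.
From mathcomp Require Import all_boot all_order all_algebra.
From mathcomp Require Import ring zify.
From Stdlib Require Import ProofIrrelevance FunctionalExtensionality PropExtensionality Classical.
Import Order.TTheory GRing.Theory Num.Theory.
Local Open Scope ring_scope.
Set Implicit Arguments. Unset Strict Implicit. Unset Printing Implicit Defensive.

Section TwoByTwo.
Variable F : fieldType.

(* Explicit 2x2 matrices and row vectors, so that computations become field identities. *)
Definition mk2 (a b c d : F) : 'M[F]_2 :=
  \matrix_(i, j) if i == 0 then (if j == 0 then a else b) else (if j == 0 then c else d).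
Definition r2 (p q : F) : 'rV[F]_2 := \row_j (if j == 0 then p else q).

Lemma ord2P (P : 'I_2 -> Prop) : P 0 -> P 1 -> forall i, P i.
Proof.
move=> P0 P1 [[|[|//]] Hi].
- by have -> : Ordinal Hi = 0 by apply: val_inj.
- by have -> : Ordinal Hi = 1 by apply: val_inj.
Qed.

Lemma r2E (x : 'rV[F]_2) : x = r2 (x 0 0) (x 0 1).
Proof. by apply/rowP; apply: ord2P; rewrite !mxE. Qed.

Lemma r2_mul p q a b c d : r2 p q *m mk2 a b c d = r2 (p * a + q * c) (p * b + q * d).
Proof. by apply/rowP; apply: ord2P; rewrite !mxE !big_ord_recl big_ord0 !mxE /= addr0. Qed.

Lemma mk2_mul a b c d a' b' c' d' :
  mk2 a b c d *m mk2 a' b' c' d' =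
  mk2 (a * a' + b * c') (a * b' + b * d') (c * a' + d * c') (c * b' + d * d').
Proof.
apply/matrixP; apply: ord2P; apply: ord2P;
by rewrite !mxE !big_ord_recl big_ord0 !mxE /= addr0.
Qed.

Lemma mk2_1 : mk2 1 0 0 1 = 1%:M.
Proof. by apply/matrixP; apply: ord2P; apply: ord2P; rewrite !mxE. Qed.

Lemma r2_add p q p' q' : r2 p q + r2 p' q' = r2 (p + p') (q + q').
Proof. by apply/rowP; apply: ord2P; rewrite !mxE. Qed.

Lemma r2_scale c p q : c *: r2 p q = r2 (c * p) (c * q).
Proof. by apply/rowP; apply: ord2P; rewrite !mxE. Qed.

Lemma mk2_scale c a b d e : c *: mk2 a b d e = mk2 (c * a) (c * b) (c * d) (c * e).
Proof. by apply/matrixP; apply: ord2P; apply: ord2P; rewrite !mxE. Qed.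

Lemma mk2_unit a b c d : a * d - b * c != 0 -> mk2 a b c d \in unitmx.
Proof.
move=> nzD; set D := a * d - b * c.
apply: (proj1 (@mulmx1_unit _ _ _ (mk2 (d / D) (- b / D) (- c / D) (a / D)) _)).
by rewrite mk2_mul -mk2_1; congr mk2; rewrite /D; field.
Qed.

End TwoByTwo.

Section BruhatTitsTree.
Variable F : fieldType.
Variable v : F -> int.
Variable pi : F.
Hypothesis v_mul : forall x y, x != 0 -> y != 0 -> v (x * y) = v x + v y.
Hypothesis v_ultra :
  forall x y, x != 0 -> y != 0 -> x + y != 0 -> Num.min (v x) (v y) <= v (x + y).
Hypothesis pi_neq0 : pi != 0.
Hypothesis v_pi : v pi = 1.

Notation vge := (vge v).
Notation inO := (inO v).

Lemma v1 : v 1 = 0.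
Proof. by have := v_mul (oner_neq0 F) (oner_neq0 F); rewrite mulr1; set a := v 1; lia. Qed.

Lemma vV x : x != 0 -> v x^-1 = - v x.
Proof. by move=> nx; have := v_mul nx (invr_neq0 nx); rewrite mulfV // v1; set a := v x^-1; lia. Qed.

Lemma vN x : x != 0 -> v (- x) = v x.
Proof.
have nN1 : (-1 : F) != 0 by rewrite oppr_eq0 oner_neq0.
have vN1 : v (-1) = 0.
  by have := v_mul nN1 nN1; rewrite mulrNN mulr1 v1; set a := v (-1); lia.
by move=> nx; rewrite -mulN1r v_mul // vN1 add0r.
Qed.

Lemma vgeN x k : vge x k -> vge (- x) k.
Proof.
have [->|nx] := eqVneq x 0; first by rewrite oppr0; left.
by case=> [x0|H]; [move: nx; rewrite x0 eqxx | right; rewrite vN].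
Qed.

Lemma vgeD x y k : vge x k -> vge y k -> vge (x + y) k.
Proof.
have [->|nx] := eqVneq x 0; first by rewrite add0r.
have [->|ny] := eqVneq y 0; first by rewrite addr0.
have [->|nxy] := eqVneq (x + y) 0; first by left.
case=> [x0|Hx]; first by move: nx; rewrite x0 eqxx.
case=> [y0|Hy]; first by move: ny; rewrite y0 eqxx.
by right; apply: le_trans (v_ultra nx ny nxy); rewrite le_min Hx Hy.
Qed.

Lemma vgeM x y k l : vge x k -> vge y l -> vge (x * y) (k + l).
Proof.
have [->|nx] := eqVneq x 0; first by rewrite mul0r; left.
have [->|ny] := eqVneq y 0; first by rewrite mulr0; left.
case=> [x0|Hx]; first by move: nx; rewrite x0 eqxx.
case=> [y0|Hy]; first by move: ny; rewrite y0 eqxx.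
by right; rewrite v_mul //; lia.
Qed.

Lemma inOD x y : inO x -> inO y -> inO (x + y). Proof. exact: vgeD. Qed.
Lemma inON x : inO x -> inO (- x). Proof. exact: vgeN. Qed.
Lemma inOB x y : inO x -> inO y -> inO (x - y).
Proof. by move=> Hx Hy; apply: inOD => //; apply: inON. Qed.
Lemma inOM x y : inO x -> inO y -> inO (x * y).
Proof. by move=> Hx Hy; have := vgeM Hx Hy; rewrite addr0. Qed.
Lemma inO0 : inO 0. Proof. by left. Qed.
Lemma inO1 : inO 1. Proof. by right; rewrite v1. Qed.
Lemma inO_pi : inO pi. Proof. by right; rewrite v_pi. Qed.
Lemma inO_exp n : inO (pi ^+ n).
Proof. by elim: n => [|n IH]; rewrite ?expr0 ?exprS; [exact: inO1 | apply: inOM => //; exact: inO_pi]. Qed.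

Lemma vge1_inO x : vge x 1 -> inO x.
Proof. by case=> [->|H]; [left | right; lia]. Qed.

Lemma divpi x : vge x 1 -> inO (x / pi).
Proof.
have [->|nx] := eqVneq x 0; first by rewrite mul0r; left.
case=> [x0|H]; first by move: nx; rewrite x0 eqxx.
by right; rewrite v_mul ?invr_eq0 // vV // v_pi; lia.
Qed.

Lemma vge_pi : vge pi 1. Proof. by right; rewrite v_pi. Qed.

Lemma mulpi x : inO x -> vge (pi * x) 1.
Proof. by move=> H; have := vgeM vge_pi H; rewrite addr0. Qed.

Lemma unitO x : inO x -> ~ vge x 1 -> x != 0 /\ inO x^-1.
Proof.
have [->|nx] := eqVneq x 0; first by move=> _ []; left.
case=> [x0|Hx] Nx; first by move: nx; rewrite x0 eqxx.
split=> //; right; rewrite vV // oppr_ge0.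
by apply: contra_notT Nx; rewrite -ltNge => ?; right; lia.
Qed.

Lemma unitO_pi x : inO (pi * x) -> ~ vge (pi * x) 1 -> x != 0 /\ inO (pi * x)^-1.
Proof.
move=> Hx Nx; have [nx HxV] := unitO Hx Nx; split=> //.
by move: nx; rewrite mulf_eq0 negb_or => /andP [].
Qed.

Lemma notO_piV : ~ inO pi^-1.
Proof. by case=> [/eqP|]; [rewrite invr_eq0 (negbTE pi_neq0) | rewrite vV // v_pi]. Qed.

Lemma not_vge1_1 : ~ vge (1 : F) 1.
Proof. by case=> [/eqP|]; [rewrite oner_eq0 | rewrite v1]. Qed.

Definition Lat (M : 'M[F]_2) : 'rV[F]_2 -> Prop :=
  fun x => exists a : 'rV[F]_2, (forall i, inO (a 0 i)) /\ x = a *m M.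

Lemma introwE (a : 'rV[F]_2) : (forall i, inO (a 0 i)) <-> inO (a 0 0) /\ inO (a 0 1).
Proof. by split=> [H|[H0 H1]]; [split; apply: H | apply: ord2P]. Qed.

Lemma LatE M x : Lat M x <-> exists p q, [/\ inO p, inO q & x = r2 p q *m M].
Proof.
split=> [[a [/introwE [Ha0 Ha1] ->]]|[p [q [Hp Hq ->]]]].
- by exists (a 0 0), (a 0 1); rewrite -r2E.
- by exists (r2 p q); split=> //; apply/introwE; rewrite !mxE.
Qed.

Lemma Lat_comb M a b x y :
  inO a -> inO b -> Lat M x -> Lat M y -> Lat M (a *: x + b *: y).
Proof.
move=> Ha Hb [s [Hs ->]] [t [Ht ->]]; exists (a *: s + b *: t).
split; last by rewrite mulmxDl -!scalemxAl.
by move=> i; rewrite !mxE; apply: inOD; apply: inOM.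
Qed.

Lemma LatZ M a x : inO a -> Lat M x -> Lat M (a *: x).
Proof. by move=> Ha Hx; rewrite -[a *: x]addr0 -(scale0r x); apply: Lat_comb => //; exact: inO0. Qed.

Lemma Lat_rows_sub (M : 'M[F]_2) a b c d :
  Lat M (r2 a b) -> Lat M (r2 c d) -> lsubset (Lat (mk2 a b c d)) (Lat M).
Proof.
move=> Hab Hcd x /LatE [p [q [Hp Hq ->]]].
by rewrite r2_mul -r2_add -!r2_scale; apply: Lat_comb.
Qed.

Lemma lsubset_r2 (L L' : 'rV[F]_2 -> Prop) :
  (forall p q, L (r2 p q) -> L' (r2 p q)) -> lsubset L L'.
Proof. by move=> H w; rewrite (r2E w); apply: H. Qed.

Lemma Lat1E x : Lat 1%:M x <-> inO (x 0 0) /\ inO (x 0 1).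
Proof.
rewrite LatE; split=> [[p [q [Hp Hq ->]]]|[H0 H1]].
- by rewrite mulmx1 !mxE.
- by exists (x 0 0), (x 0 1); rewrite mulmx1 -r2E.
Qed.

Definition Lmul (A : 'M[F]_2) (L : 'rV[F]_2 -> Prop) : 'rV[F]_2 -> Prop :=
  fun w => L (w *m invmx A).

Lemma lsub_Lmul A P Q : A \in unitmx -> lsubset (Lmul A P) (Lmul A Q) = lsubset P Q.
Proof.
move=> HA; apply: propositional_extensionality; split=> H w; last exact: H.
by have := H (w *m A); rewrite /Lmul mulmxK.
Qed.

Lemma scaleL_Lmul c A L : scaleL c (Lmul A L) = Lmul A (scaleL c L).
Proof. by apply: functional_extensionality => w; rewrite /scaleL /Lmul scalemxAl. Qed.

Lemma Lat_mulr (M h : 'M[F]_2) : h \in unitmx -> Lat (M *m h) = Lmul h (Lat M).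
Proof.
move=> Hh; apply: functional_extensionality => x; apply: propositional_extensionality.
split=> [[a [Ha ->]]|[a [Ha Ex]]]; exists a; split=> //.
- by rewrite mulmxA mulmxK.
- by rewrite mulmxA -Ex mulmxKV.
Qed.

Lemma Lat_unit h : h \in unitmx -> Lat h = Lmul h (Lat 1%:M).
Proof. by move=> Hh; rewrite -{1}(mul1mx h) Lat_mulr. Qed.

Lemma Lat_scale (M : 'M[F]_2) c : c != 0 -> Lat (c *: M) = scaleL c (Lat M).
Proof.
move=> nc; apply: functional_extensionality => x; apply: propositional_extensionality.
split=> [[a [Ha ->]]|[a [Ha Ex]]]; exists a; split=> //.
- by rewrite -scalemxAr scalerA mulVf // scale1r.
- by rewrite -scalemxAr -Ex scalerA mulfV // scale1r.
Qed.

Definition integral_mx (Q : 'M[F]_2) := forall i j, inO (Q i j).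

Lemma integral_mk2 a b c d : inO a -> inO b -> inO c -> inO d -> integral_mx (mk2 a b c d).
Proof. by move=> *; apply: ord2P; apply: ord2P; rewrite mxE. Qed.

Lemma Lat_integral_mul (a : 'rV[F]_2) Q :
  (forall i, inO (a 0 i)) -> integral_mx Q -> forall j, inO ((a *m Q) 0 j).
Proof.
by move=> Ha HQ j; rewrite mxE !big_ord_recl big_ord0 addr0; apply: inOD; apply: inOM.
Qed.

Lemma Lat_GLo Q Q' M :
  integral_mx Q -> integral_mx Q' -> Q' *m Q = 1%:M -> Lat (Q *m M) = Lat M.
Proof.
move=> HQ HQ' EQ; apply: functional_extensionality => x; apply: propositional_extensionality.
split=> [[a [Ha ->]]|[a [Ha ->]]].
- by exists (a *m Q); split; [exact: Lat_integral_mul | rewrite mulmxA].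
- exists (a *m Q'); split; first exact: Lat_integral_mul.
  by rewrite mulmxA -(mulmxA a) EQ mulmx1.
Qed.

(* The vertex [Lat h] of the tree, for h invertible (a junk default otherwise). *)
Definition Vc (h : 'M[F]_2) :=
  if h \in unitmx then hclass (Lat h) else hclass (Lat 1%:M).

Lemma Vc_vertex h : is_vertex v (Vc h).
Proof.
rewrite /Vc; case: ifP => Hh; [exists (Lat h) | exists (Lat 1%:M)]; split=> //.
- by exists h.
- by exists 1%:M; first exact: unitmx1.
Qed.

Definition V h : vertex v := exist _ (Vc h) (Vc_vertex h).

Lemma V_sval h : h \in unitmx -> sval (V h) = hclass (Lat h).
Proof. by move=> Hh; rewrite /= /Vc Hh. Qed.

Lemma vertex_eq (x y : vertex v) : sval x = sval y -> x = y.
Proof. by apply: eq_sig_hprop => *; apply: proof_irrelevance. Qed.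

Lemma V_surj (x : vertex v) : exists2 h, h \in unitmx & x = V h.
Proof.
case: x => C [L [[g Hg HL] EC]]; exists g => //; apply: vertex_eq; rewrite V_sval //= EC.
congr hclass; apply: functional_extensionality => w; apply: propositional_extensionality.
exact: HL.
Qed.

Lemma V_eq h h' : h \in unitmx -> h' \in unitmx -> Lat h = Lat h' -> V h = V h'.
Proof. by move=> Hh Hh' E; apply: vertex_eq; rewrite !V_sval // E. Qed.

Lemma V_hom h c : h \in unitmx -> c != 0 -> V (c *: h) = V h.
Proof.
move=> Hh nc; have Hch : c *: h \in unitmx by rewrite unitmxZ // unitfE.
apply: vertex_eq; rewrite !V_sval // Lat_scale //.
apply: functional_extensionality => L; apply: propositional_extensionality.
split=> [[c' [nc' H]]|[c' [nc' H]]].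
- exists (c^-1 * c'); split; first by rewrite mulf_neq0 // invr_eq0.
  by move=> w; rewrite H /scaleL scalerA.
- exists (c * c'); split; first by rewrite mulf_neq0.
  by move=> w; rewrite H /scaleL scalerA mulrA mulVf // mul1r.
Qed.

Lemma V_mem h L : h \in unitmx -> sval (V h) L ->
  exists c, [/\ c != 0, c *: h \in unitmx & L = Lat (c *: h)].
Proof.
move=> Hh; rewrite V_sval // => -[c [nc H]].
have ncV : c^-1 != 0 by rewrite invr_eq0.
exists c^-1; split=> //; first by rewrite unitmxZ // unitfE.
apply: functional_extensionality => w; apply: propositional_extensionality.
by rewrite Lat_scale // /scaleL invrK; apply: H.
Qed.

Lemma V_in h : h \in unitmx -> sval (V h) (Lat h).
Proof. by move=> Hh; rewrite V_sval //; exists 1; split=> [|w]; rewrite ?oner_neq0 ?scale1r. Qed.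

(* GL_2(o) fixes vertices: it only changes the basis of the lattice. *)
Lemma V_GLo Q Q' h : integral_mx Q -> integral_mx Q' -> Q' *m Q = 1%:M ->
  h \in unitmx -> V (Q *m h) = V h.
Proof.
move=> HQ HQ' EQ Hh; apply: V_eq => //; last exact: Lat_GLo EQ.
by rewrite unitmx_mul Hh andbT; case: (mulmx1_unit EQ).
Qed.

Definition lat_adj (L L' : 'rV[F]_2 -> Prop) : Prop :=
  [/\ lsubset (scaleL pi L) L', ~ lsubset L' (scaleL pi L), lsubset L' L & ~ lsubset L L'].

Lemma adjP (x y : vertex v) :
  adj pi x y <-> exists L L', [/\ sval x L, sval y L' & lat_adj L L'].
Proof.
split=> [[L [L' [Hx [Hy [H1 [H2 [H3 H4]]]]]]]|[L [L' [Hx Hy [H1 H2 H3 H4]]]]].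
- by exists L, L'.
- by exists L, L'.
Qed.

Lemma lat_adj_Lmul A L L' :
  A \in unitmx -> lat_adj (Lmul A L) (Lmul A L') <-> lat_adj L L'.
Proof. by move=> HA; rewrite /lat_adj scaleL_Lmul !lsub_Lmul. Qed.

Lemma actC_hclass g A : A \in unitmx ->
  actC A (hclass (Lat g)) = hclass (Lat (g *m A)).
Proof.
move=> HA; rewrite Lat_mulr //; apply: functional_extensionality => L'.
apply: propositional_extensionality; rewrite /actC /hclass /Lmul.
split=> -[c [nc H]]; exists c; split=> // w.
- by have := H (w *m invmx A); rewrite mulmxKV // -scalemxAl.
- by rewrite H -scalemxAl mulmxK.
Qed.

Definition fC (A : 'M[F]_2) (C : ('rV[F]_2 -> Prop) -> Prop) :=
  if A \in unitmx then actC A C else C.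

Lemma fC_vertex A (x : vertex v) : is_vertex v (fC A (sval x)).
Proof.
rewrite /fC; case: ifP => HA; last exact: proj2_sig x.
have [h Hh ->] := V_surj x; rewrite V_sval // actC_hclass //.
by exists (Lat (h *m A)); split=> //; exists (h *m A); rewrite ?unitmx_mul ?Hh.
Qed.

Definition fA A (x : vertex v) : vertex v := exist _ (fC A (sval x)) (fC_vertex A x).

Lemma fA_sval A x : A \in unitmx -> sval (fA A x) = actC A (sval x).
Proof. by move=> HA; rewrite /= /fC HA. Qed.

Lemma fA_V A h : A \in unitmx -> h \in unitmx -> fA A (V h) = V (h *m A).
Proof.
move=> HA Hh; apply: vertex_eq.
by rewrite fA_sval // !V_sval ?actC_hclass // unitmx_mul Hh HA.
Qed.

Lemma fA_K A : A \in unitmx -> cancel (fA A) (fA (invmx A)).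
Proof.
move=> HA x; have [h Hh ->] := V_surj x.
by rewrite fA_V // fA_V ?unitmx_inv ?mulmxK // unitmx_mul Hh HA.
Qed.

Lemma fA_KV A : A \in unitmx -> cancel (fA (invmx A)) (fA A).
Proof.
move=> HA x; have [h Hh ->] := V_surj x.
by rewrite fA_V ?unitmx_inv // fA_V ?mulmxKV // unitmx_mul Hh unitmx_inv HA.
Qed.

Lemma fA_mem A (x : vertex v) L : A \in unitmx -> sval x L -> sval (fA A x) (Lmul A L).
Proof.
move=> HA Hx; rewrite fA_sval // /actC.
suff -> : (fun w => Lmul A L (w *m A)) = L by [].
by apply: functional_extensionality => w; rewrite /Lmul mulmxK.
Qed.

Lemma fA_adj A x y : A \in unitmx -> adj pi x y -> adj pi (fA A x) (fA A y).
Proof.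
move=> HA /adjP [L [L' [Hx Hy HLL']]]; apply/adjP.
exists (Lmul A L), (Lmul A L'); split; [exact: fA_mem | exact: fA_mem |].
by rewrite lat_adj_Lmul.
Qed.

Lemma walk_map (f : vertex v -> vertex v) x y n :
  (forall x y, adj pi x y -> adj pi (f x) (f y)) -> walk pi x y n -> walk pi (f x) (f y) n.
Proof.
move=> Hf; elim=> [z|a b c m Hab _ IH]; first exact: walk0.
exact: walkS (Hf _ _ Hab) IH.
Qed.

Lemma fA_walk A : A \in unitmx ->
  forall x y n, walk pi x y n <-> walk pi (fA A x) (fA A y) n.
Proof.
move=> HA x y n; split; first by apply: walk_map => ??; apply: fA_adj.
move=> /(walk_map (f := fA (invmx A))); rewrite !fA_K //; apply=> ??.
by apply: fA_adj; rewrite unitmx_inv.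
Qed.

Lemma fA_aut A : A \in unitmx -> is_aut pi (fA A).
Proof.
move=> HA; split; first by exists (fA (invmx A)); [exact: fA_K | exact: fA_KV].
move=> x y n; split=> -[Wn Hmin]; split.
- by apply/(fA_walk HA x y n).
- by move=> m /(fA_walk HA x y m); apply: Hmin.
- by apply/(fA_walk HA x y n).
- by move=> m /(fA_walk HA x y m); apply: Hmin.
Qed.

Lemma fA_Ghat A e : A \in unitmx -> in_Ghat pi e (fA A).
Proof.
move=> HA; split; first exact: fA_aut.
by move=> x1 x2 _; exists A => // y _; rewrite fA_sval.
Qed.

Definition Dn (n : nat) := mk2 1 0 0 (pi ^+ n).

Lemma Dn_unit n : Dn n \in unitmx.
Proof. by apply: mk2_unit; rewrite mulr0 subr0 mul1r expf_neq0. Qed.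

Lemma Dn0 : Dn 0 = 1%:M.
Proof. by rewrite /Dn expr0 mk2_1. Qed.

Lemma Dn_mul n : Dn 1 *m Dn n = Dn n.+1.
Proof. by rewrite /Dn mk2_mul [pi ^+ n.+1]exprS expr1; congr mk2; ring. Qed.

Lemma LatD1 w : Lat (Dn 1) w <-> inO (w 0 0) /\ vge (w 0 1) 1.
Proof.
rewrite LatE /Dn expr1; split=> [[p [q [Hp Hq ->]]]|[H0 H1]].
- rewrite r2_mul !mxE /= mulr1 mulr0 addr0 mulr0 add0r mulrC.
  by split=> //; apply: mulpi.
- exists (w 0 0), (w 0 1 / pi); split=> //; first exact: divpi.
  by rewrite r2_mul {1}(r2E w); congr r2; field.
Qed.

Lemma lat_adj_D1 : lat_adj (Lat 1%:M) (Lat (Dn 1)).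
Proof.
have pi_mul x : x = pi * (pi^-1 * x) by rewrite mulrA mulfV // mul1r.
split.
- move=> w /Lat1E; rewrite !mxE => -[H0 H1]; apply/LatD1; split.
  + by rewrite (pi_mul (w 0 0)); apply: inOM => //; exact: inO_pi.
  + by rewrite (pi_mul (w 0 1)); apply: mulpi.
- move=> H; have /H /Lat1E [] : Lat (Dn 1) (r2 1 0) by apply/LatD1; rewrite !mxE; split; [exact: inO1 | left].
  by rewrite !mxE mulr1 => /notO_piV.
- by move=> w /LatD1 [H0 H1]; apply/Lat1E; split=> //; apply: vge1_inO.
- move=> H; have /H /LatD1 [] : Lat 1%:M (r2 0 1) by apply/Lat1E; rewrite !mxE; split; [exact: inO0 | exact: inO1].
  by rewrite !mxE => _ /not_vge1_1.
Qed.

Lemma adj_D h : h \in unitmx -> adj pi (V h) (V (Dn 1 *m h)).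
Proof.
move=> Hh; have HD : Dn 1 *m h \in unitmx by rewrite unitmx_mul Dn_unit Hh.
apply/adjP; exists (Lat h), (Lat (Dn 1 *m h)); split; try exact: V_in.
by rewrite Lat_mulr // Lat_unit // lat_adj_Lmul //; apply: lat_adj_D1.
Qed.

Lemma walk_D k : forall i h, h \in unitmx -> walk pi (V (Dn i *m h)) (V (Dn (i + k) *m h)) k.
Proof.
elim: k => [|k IH] i h Hh; first by rewrite addn0; apply: walk0.
apply: (walkS (y := V (Dn i.+1 *m h))); last by rewrite -addSnnS; apply: IH.
by rewrite -Dn_mul -mulmxA; apply: adj_D; rewrite unitmx_mul Dn_unit Hh.
Qed.

Section Neighbours.
Variable k : 'M[F]_2.
Hypothesis adj_std : lat_adj (Lat k) (Lat 1%:M).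

Lemma nbr_scaled p q : Lat k (r2 p q) -> inO (pi * p) /\ inO (pi * q).
Proof.
case: adj_std => below _ _ _ Kpq.
have /below /Lat1E : scaleL pi (Lat k) (pi *: r2 p q).
  by rewrite /scaleL scalerA mulVf // scale1r.
by rewrite !mxE.
Qed.

Lemma nbr_std p q : inO p -> inO q -> Lat k (r2 p q).
Proof. by case: adj_std => _ _ above _ Hp Hq; apply: above; apply/Lat1E; rewrite !mxE. Qed.

(* K cannot contain both pi^-1 e1 and pi^-1 e2, since pi K is strictly inside o^2. *)
Lemma nbr_not_both : Lat k (r2 pi^-1 0) -> Lat k (r2 0 pi^-1) -> False.
Proof.
case: adj_std => _ not_above _ _ K1 K2; apply: not_above; apply: lsubset_r2 => p q.
move=> /Lat1E; rewrite !mxE => -[Hp Hq]; rewrite /scaleL.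
have -> : pi^-1 *: r2 p q = p *: r2 pi^-1 0 + q *: r2 0 pi^-1.
  by rewrite !r2_scale r2_add; congr r2; ring.
exact: Lat_comb.
Qed.

Lemma nbr_caseA c : inO c -> Lat k (r2 (c / pi) pi^-1) ->
  Lat k = Lat (mk2 1 0 (c / pi) pi^-1).
Proof.
move=> Hc Kc; apply: functional_extensionality => x; apply: propositional_extensionality.
split; last by apply: Lat_rows_sub => //; apply: nbr_std; [exact: inO1 | exact: inO0].
move: x; apply: lsubset_r2 => p q Kpq; have [Hp Hq] := nbr_scaled Kpq.
set d := pi * p - pi * q * c.
case: (classic (vge d 1)) => Hd.
- apply/LatE; exists (d / pi), (pi * q); split=> //; first exact: divpi.
  by rewrite r2_mul /d; congr r2; field.
- have [nd HdV] := unitO (inOB Hp (inOM Hq Hc)) Hd.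
  have K1 : Lat k (r2 pi^-1 0).
    have -> : r2 pi^-1 0 = d^-1 *: r2 p q + (- (pi * q * d^-1)) *: r2 (c / pi) pi^-1.
      by rewrite !r2_scale r2_add /d; congr r2; field; apply/andP.
    by apply: Lat_comb => //; apply: inON; apply: inOM.
  exfalso; apply: (nbr_not_both K1).
  have -> : r2 0 pi^-1 = 1 *: r2 (c / pi) pi^-1 + (- c) *: r2 pi^-1 0.
    by rewrite !r2_scale r2_add; congr r2; field.
  by apply: Lat_comb => //; [exact: inO1 | exact: inON].
Qed.

Lemma nbr_caseB : Lat k (r2 pi^-1 0) -> Lat k = Lat (mk2 pi^-1 0 0 1).
Proof.
move=> K1; apply: functional_extensionality => x; apply: propositional_extensionality.
split; last by apply: Lat_rows_sub => //; apply: nbr_std; [exact: inO0 | exact: inO1].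
move: x; apply: lsubset_r2 => p q Kpq; have [Hp Hq] := nbr_scaled Kpq.
case: (classic (vge (pi * q) 1)) => Hq1.
- apply/LatE; exists (pi * p), (pi * q / pi); split=> //; first exact: divpi.
  by rewrite r2_mul; congr r2; field.
- have [nq HqV] := unitO_pi Hq Hq1.
  exfalso; apply: (nbr_not_both K1).
  have -> : r2 0 pi^-1 = (pi * q)^-1 *: r2 p q + (- (pi * p * (pi * q)^-1)) *: r2 pi^-1 0.
    by rewrite !r2_scale r2_add; congr r2; field; apply/andP.
  by apply: Lat_comb => //; apply: inON; apply: inOM.
Qed.

Lemma nbr_classify :
  (exists2 c, inO c & Lat k = Lat (mk2 1 0 (c / pi) pi^-1)) \/
  Lat k = Lat (mk2 pi^-1 0 0 1).
Proof.
have [s [Ks Ns]] : exists s, Lat k s /\ ~ Lat 1%:M s.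
  case: adj_std => _ _ _ not_below; apply: NNPP => N; apply: not_below => w Kw.
  by apply: NNPP => Nw; apply: N; exists w.
rewrite (r2E s) in Ks Ns; move: (s 0 0) (s 0 1) Ks Ns => p q Ks Ns.
have [Ha Hb] := nbr_scaled Ks.
case: (classic (vge (pi * q) 1)) => Hb1.
- right; apply: nbr_caseB.
  have Na : ~ vge (pi * p) 1.
    move=> Ha1; apply: Ns; apply/Lat1E; rewrite !mxE.
    by split; [rewrite -(mulKf pi_neq0 p) mulrC | rewrite -(mulKf pi_neq0 q) mulrC]; apply: divpi.
  have [na HaV] := unitO_pi Ha Na.
  have -> : r2 pi^-1 0 = (pi * p)^-1 *: r2 p q + (- ((pi * p)^-1 * (pi * q / pi))) *: r2 0 1.
    by rewrite !r2_scale r2_add; congr r2; field; apply/andP.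
  apply: Lat_comb => //; last by apply: nbr_std; [exact: inO0 | exact: inO1].
  by apply: inON; apply: inOM => //; apply: divpi.
- left; have [nb HbV] := unitO_pi Hb Hb1.
  exists (pi * p * (pi * q)^-1); first exact: inOM.
  apply: nbr_caseA; first exact: inOM.
  have -> : r2 (pi * p * (pi * q)^-1 / pi) pi^-1 = (pi * q)^-1 *: r2 p q.
    by rewrite r2_scale; congr r2; field; apply/andP.
  exact: LatZ.
Qed.

End Neighbours.

Lemma adj_classify x g : g \in unitmx -> adj pi x (V g) ->
  (exists2 c, inO c & x = V (mk2 1 0 (c / pi) pi^-1 *m g)) \/
  x = V (mk2 pi^-1 0 0 1 *m g).
Proof.
move=> Hg /adjP [L [L' [Hx Hy HL]]].
have [c [nc Hcg EL']] := V_mem Hg Hy.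
have [h Hh Exh] := V_surj x; rewrite {}Exh in Hx *.
have [c' [nc' Hch EL]] := V_mem Hh Hx.
have VgE P : P \in unitmx -> V (P *m (c *: g)) = V (P *m g).
  by move=> HP; rewrite -scalemxAr V_hom // unitmx_mul HP.
set k := (c' *: h) *m invmx (c *: g).
have Hk : k \in unitmx by rewrite unitmx_mul Hch unitmx_inv.
have Eh : c' *: h = k *m (c *: g) by rewrite mulmxKV.
rewrite -(V_hom Hh nc') Eh.
rewrite EL EL' Eh Lat_mulr // [Lat (c *: g)]Lat_unit // lat_adj_Lmul // in HL.
have HP (P : 'M[F]_2) : P \in unitmx -> Lat k = Lat P -> V (k *m (c *: g)) = V (P *m g).
  move=> HP EP; rewrite -VgE //; apply: V_eq; first by rewrite -Eh.
  - by rewrite unitmx_mul HP Hcg.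
  - by rewrite [Lat (k *m _)]Lat_mulr // [Lat (P *m _)]Lat_mulr // EP.
case: (nbr_classify HL) => [[c0 Hc0 E]|E]; [left; exists c0 => // | right]; apply: HP E.
- by apply: mk2_unit; rewrite mul0r subr0 mul1r invr_eq0.
- by apply: mk2_unit; rewrite mulr0 subr0 mulr1 invr_eq0.
Qed.

Definition shear (t : F) := mk2 1 0 t 1.
Definition swap := mk2 0 1 1 (0 : F).

Lemma V_shear t h : inO t -> h \in unitmx -> V (shear t *m h) = V h.
Proof.
move=> Ht; apply: (@V_GLo _ (shear (- t))); rewrite /shear.
- by apply: integral_mk2; [exact: inO1 | exact: inO0 | | exact: inO1].
- by apply: integral_mk2; [exact: inO1 | exact: inO0 | exact: inON | exact: inO1].
- by rewrite mk2_mul -mk2_1; congr mk2; ring.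
Qed.

Lemma V_swap h : h \in unitmx -> V (swap *m h) = V h.
Proof.
have Hs : integral_mx swap by apply: integral_mk2; [exact: inO0 | exact: inO1 | exact: inO1 | exact: inO0].
by apply: (V_GLo Hs Hs); rewrite /swap mk2_mul -mk2_1; congr mk2; ring.
Qed.

Lemma Dn_shear n c : Dn n.+1 *m mk2 1 0 (c / pi) pi^-1 = shear (pi ^+ n * c) *m Dn n.
Proof. by rewrite /Dn /shear !mk2_mul exprS; congr mk2; field. Qed.

Lemma Dn1_swap : Dn 1 *m (swap *m mk2 pi^-1 0 0 1) = swap.
Proof. by rewrite /Dn /swap !mk2_mul expr1; congr mk2; field. Qed.

Lemma V_Dn1 g : g \in unitmx -> V (mk2 pi^-1 0 0 1 *m g) = V (Dn 1 *m g).
Proof.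
move=> Hg; have -> : mk2 pi^-1 0 0 1 = pi^-1 *: Dn 1.
  by rewrite /Dn mk2_scale expr1; congr mk2; field.
by rewrite -scalemxAl V_hom ?unitmx_mul ?Dn_unit ?Hg // invr_eq0.
Qed.

Lemma dist0 (x z : vertex v) : dist pi x z 0 -> x = z.
Proof. by case=> W _; inversion W. Qed.

Lemma dist_step (x z : vertex v) n : dist pi x z n.+1 -> exists y, adj pi x y /\ dist pi y z n.
Proof.
case=> W Hmin; inversion W as [|x' y z' n' Hxy Wyz]; subst.
by exists y; split=> //; split=> // m Wm; have := Hmin _ (walkS Hxy Wm).
Qed.

Lemma geodesic_normal_form n : forall x z : vertex v, dist pi x z n ->
  exists2 g, g \in unitmx & x = V g /\ z = V (Dn n *m g).
Proof.
elim: n => [|n IH] x z Dxz.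
  have <- := dist0 Dxz; have [g Hg ->] := V_surj x.
  by exists g => //; rewrite Dn0 mul1mx.
have [y [Axy Dyz]] := dist_step Dxz; have [g Hg [Ey Ez]] := IH _ _ Dyz.
rewrite {}Ey {}Ez in Axy Dxz *.
case: (adj_classify Hg Axy) => [[c Hc ->]|Ex].
  have HP : mk2 1 0 (c / pi) pi^-1 *m g \in unitmx.
    by rewrite unitmx_mul Hg andbT mk2_unit // mul0r subr0 mul1r invr_eq0.
  exists (mk2 1 0 (c / pi) pi^-1 *m g) => //; split=> //.
  rewrite mulmxA Dn_shear -mulmxA V_shear ?unitmx_mul ?Dn_unit ?Hg //.
  by apply: inOM => //; exact: inO_exp.
rewrite Ex V_Dn1 // in Dxz *.
case: n {IH Dyz} Dxz => [|m] [_ Hmin].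
  have HQ : swap *m (mk2 pi^-1 0 0 1 *m g) \in unitmx.
    by rewrite !unitmx_mul Hg !mk2_unit ?mulr0 ?mulr1 ?mul1r ?sub0r ?subr0 ?oppr_eq0 ?oner_neq0 ?invr_eq0.
  exists (swap *m (mk2 pi^-1 0 0 1 *m g)) => //; split.
  - by rewrite V_swap ?V_Dn1 // unitmx_mul Hg mk2_unit // mulr0 subr0 mulr1 invr_eq0.
  - by rewrite Dn0 mul1mx [swap *m _]mulmxA mulmxA Dn1_swap V_swap.
by have := Hmin _ (walk_D m 1 Hg); lia.
Qed.

End BruhatTitsTree.

Theorem mainTheorem6 (F : fieldType) (v : F -> int) (pi : F)
  (hF : nonarch_local_field v) (hpi : pi != 0 /\ v pi = 1)
  (e : nat) (he : (1 <= e)%N)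
  (x1 x2 y1 y2 : vertex v) (n : nat) :
  dist pi x1 x2 n -> dist pi y1 y2 n ->
  exists g : vertex v -> vertex v,
    in_Ghat pi e g /\ g x1 = y1 /\ g x2 = y2.
Proof.
case: hF => [[v_mul v_ultra _] _ _]; case: hpi => pi_neq0 v_pi.
move=> /(geodesic_normal_form v_mul v_ultra pi_neq0 v_pi) [g Hg [-> ->]].
move=> /(geodesic_normal_form v_mul v_ultra pi_neq0 v_pi) [h Hh [-> ->]].
have HA : invmx g *m h \in unitmx by rewrite unitmx_mul unitmx_inv Hg Hh.
exists (fA (invmx g *m h)); split; first exact: fA_Ghat.
have HgD : Dn pi n *m g \in unitmx by rewrite unitmx_mul Hg andbT Dn_unit.
by rewrite !fA_V // -mulmxA !mulKVmx.
Qed.
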